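(* Let $X_1,X_2,X_3,X_4$ be finite discrete random variables, where $X_1$ and $X_3$ are binary with values in $\{1,2\}$ and $X_i$ takes values in $[r_i]=\{1,\dots,r_i\}$ for $i\in\{2,4\}$. Suppose that $X_1 \perp\!\!\!\perp X_3 \mid (X_2,X_4)$ and $X_2 \perp\!\!\!\perp X_4 \mid (X_1,X_3)$. Then at least one of the following is true: (1) the joint distribution lies in the closure of the graphical model $\mathcal{M}_{C_4}$; (2) there are $i\in\{2,4\}$ and sets $E,F\subseteq[r_i]$ such that (almost surely): if $(X_1,X_3)=(1,1)$ then $X_i\in E$; if $(X_1,X_3)=(1,2)$ then $X_i\in F$; if $(X_1,X_3)=(2,1)$ then $X_i\notin F$; if $(X_1,X_3)=(2,2)$ then $X_i\notin E$. Conversely, any probability distribution of $(X_1,X_2,X_3,X_4)$ that satisfies one of the statements (1) or (2) and that satisfies $X_2 \perp\!\!\!\perp X_4 \mid (X_1,X_3)$ also satisfies $X_1 \perp\!\!\!\perp X_3 \mid (X_2,X_4)$ and $X_2 \perp\!\!\!\perp X_4 \mid (X_1,X_3)$.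
   Context: $C_4$ is the four-cycle graph on vertices $\{1,2,3,4\}$ with edges $\{1,2\},\{2,3\},\{3,4\},\{1,4\}$. The graphical model $\mathcal{M}_{C_4}$ is the set of strictly positive probability distributions $p$ on $\{1,2\}\times[r_2]\times\{1,2\}\times[r_4]$ that factor as $p(x_1,x_2,x_3,x_4)=\psi_{12}(x_1,x_2)\psi_{23}(x_2,x_3)\psi_{34}(x_3,x_4)\psi_{14}(x_1,x_4)$ for some functions $\psi_{ij}$; its closure is taken in the Euclidean topology. Distributions may have zeros; conditional independence conditions only on events of positive probability. *)

From HB Require Import structures.
From mathcomp Require Import all_boot all_order all_algebra.
From mathcomp Require Import reals.
Set Implicit Arguments. Unset Strict Implicit. Unset Printing Implicit Defensive.
Import Order.TTheory GRing.Theory Num.Theory.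
Local Open Scope ring_scope.

(* The state 1 (resp. 2) of X1, X3 is encoded by ord 0 (resp. 1) of 'I_2;
   the state k of X2 (resp. X4) is encoded by k-1 : 'I_r2 (resp. 'I_r4). *)
Definition dist4 (R : realType) (r2 r4 : nat) :=
  'I_2 -> 'I_r2 -> 'I_2 -> 'I_r4 -> R.

Section Defs.
Variables (R : realType) (r2 r4 : nat).
Implicit Types p : dist4 R r2 r4.

Definition is_prob p : Prop :=
  (forall a b c d, 0 <= p a b c d) /\
  \sum_(a : 'I_2) \sum_(b : 'I_r2) \sum_(c : 'I_2) \sum_(d : 'I_r4) p a b c d = 1.

Definition m24 p b d := \sum_(a : 'I_2) \sum_(c : 'I_2) p a b c d.
Definition m124 p a b d := \sum_(c : 'I_2) p a b c d.
Definition m234 p b c d := \sum_(a : 'I_2) p a b c d.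
Definition m13 p a c := \sum_(b : 'I_r2) \sum_(d : 'I_r4) p a b c d.
Definition m123 p a b c := \sum_(d : 'I_r4) p a b c d.
Definition m134 p a c d := \sum_(b : 'I_r2) p a b c d.

Definition CI_13_24 p : Prop :=
  forall a b c d, 0 < m24 p b d ->
    p a b c d / m24 p b d = (m124 p a b d / m24 p b d) * (m234 p b c d / m24 p b d).

Definition CI_24_13 p : Prop :=
  forall a b c d, 0 < m13 p a c ->
    p a b c d / m13 p a c = (m123 p a b c / m13 p a c) * (m134 p a c d / m13 p a c).

Definition in_MC4 p : Prop :=
  is_prob p /\ (forall a b c d, 0 < p a b c d) /\
  exists (psi12 : 'I_2 -> 'I_r2 -> R) (psi23 : 'I_r2 -> 'I_2 -> R)
         (psi34 : 'I_2 -> 'I_r4 -> R) (psi14 : 'I_2 -> 'I_r4 -> R),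
    forall a b c d, p a b c d = psi12 a b * psi23 b c * psi34 c d * psi14 a d.

(* Euclidean closure (all norms on the finite-dimensional space agree;
   we use the sup norm) *)
Definition in_closure_MC4 p : Prop :=
  forall e : R, 0 < e -> exists q, in_MC4 q /\ forall a b c d, `|p a b c d - q a b c d| < e.

Definition o1 : 'I_2 := @Ordinal 2 0 isT.
Definition o2 : 'I_2 := @Ordinal 2 1 isT.

Definition cond2_X2 p : Prop :=
  exists E F : {set 'I_r2}, forall a b c d, 0 < p a b c d ->
    [/\ (a = o1 /\ c = o1 -> b \in E), (a = o1 /\ c = o2 -> b \in F),
        (a = o2 /\ c = o1 -> b \notin F) & (a = o2 /\ c = o2 -> b \notin E)].

Definition cond2_X4 p : Prop :=
  exists E F : {set 'I_r4}, forall a b c d, 0 < p a b c d ->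
    [/\ (a = o1 /\ c = o1 -> d \in E), (a = o1 /\ c = o2 -> d \in F),
        (a = o2 /\ c = o1 -> d \notin F) & (a = o2 /\ c = o2 -> d \notin E)].

Definition cond2 p : Prop := cond2_X2 p \/ cond2_X4 p.
End Defs.

(* Write D M and A M for the products of the diagonal and of the antidiagonal
   entries of a 2x2 matrix M.  X2 _||_ X4 | (X1,X3) factors the distribution as
   p(a,b,c,d) = P_b(a,c) Q_d(a,c) with nonnegative 2x2 matrices P_b and Q_d, and
   X1 _||_ X3 | (X2,X4) says that every slice p(.,b,.,d) is singular, that is
   D(P_b) D(Q_d) = A(P_b) A(Q_d).  A positive distribution of this form lies in
   M_C4 as soon as every P_b has cross ratio D/A = k and every Q_d has cross
   ratio 1/k.
   If D(P_b) = A(P_b) = 0 for every b, each P_b is supported in one row or one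
   column, which is condition (2) for X2; likewise for the Q_d and X4.
   Otherwise the bilinear relation puts all vectors (D(P_b), A(P_b)) on one ray
   and all (D(Q_d), A(Q_d)) on the mirror ray, and perturbing zero entries gives
   positive approximations with cross ratios k and 1/k, where k is the slope of
   the ray (or k_n -> 0 or +oo when the ray is an axis).
   Conversely, singularity of the slices is a closed condition that holds on
   M_C4, and condition (2) makes both products of every slice vanish. *)

From mathcomp Require Import all_boot all_order all_algebra reals.
From mathcomp Require Import boolp topology normedtype sequences.
From mathcomp Require Import ring.
Set Implicit Arguments. Unset Strict Implicit. Unset Printing Implicit Defensive.
Import Order.TTheory GRing.Theory Num.Theory.
Import numFieldNormedType.Exports.
Local Open Scope ring_scope.

Lemma I2P (a : 'I_2) : a = o1 \/ a = o2.
Proof. by case: a => -[|[|//]] lt_a_2; [left | right]; apply: val_inj. Qed.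

Lemma rev_ord_o1 : rev_ord o1 = o2. Proof. exact: val_inj. Qed.
Lemma rev_ord_o2 : rev_ord o2 = o1. Proof. exact: val_inj. Qed.

Definition cond2_pattern (T : finType) (E F : {set T}) (i : T) (a c : 'I_2) : Prop :=
  [/\ (a = o1 /\ c = o1 -> i \in E), (a = o1 /\ c = o2 -> i \in F),
      (a = o2 /\ c = o1 -> i \notin F) & (a = o2 /\ c = o2 -> i \notin E)].

Section TwoByTwo.
Variable R : realFieldType.
Implicit Types M : 'I_2 -> 'I_2 -> R.

Lemma sum_I2 (F : 'I_2 -> R) : \sum_(i : 'I_2) F i = F o1 + F o2.
Proof. by rewrite big_ord_recl big_ord1; congr (F _ + F _); apply: val_inj. Qed.

Definition diag_mul M := M o1 o1 * M o2 o2.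
Definition antidiag_mul M := M o1 o2 * M o2 o1.
Definition total2 M := \sum_(a : 'I_2) \sum_(c : 'I_2) M a c.

Lemma indep2_defect M a c :
  M a c * total2 M - (\sum_(c' : 'I_2) M a c') * (\sum_(a' : 'I_2) M a' c)
  = (if a == c then 1 else -1) * (diag_mul M - antidiag_mul M).
Proof.
rewrite /total2 /diag_mul /antidiag_mul !sum_I2.
by case: (I2P a) => ->; case: (I2P c) => ->; rewrite /=; ring.
Qed.

Lemma eq_div_sq (x r t s : R) : s != 0 ->
  x / s = (r / s) * (t / s) <-> x * s - r * t = 0.
Proof.
move=> s0; rewrite mulf_div; split=> [/eqP|/eqP].
  by rewrite eqr_div ?mulf_neq0 // mulrA (inj_eq (mulIf s0)) -subr_eq0 => /eqP.
by rewrite subr_eq0 => /eqP e; apply/eqP; rewrite eqr_div ?mulf_neq0 // mulrA e.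
Qed.

Lemma indep2P M : (forall a c, 0 <= M a c) ->
  (forall a c, 0 < total2 M ->
     M a c / total2 M =
     ((\sum_(c' : 'I_2) M a c') / total2 M) * ((\sum_(a' : 'I_2) M a' c) / total2 M))
  <-> diag_mul M = antidiag_mul M.
Proof.
move=> M0; have [tot0|tot_neq0] := eqVneq (total2 M) 0.
  split=> [_|_ a c]; last by rewrite tot0 ltxx.
  have row0 a : \sum_(c : 'I_2) M a c = 0.
    by apply: (psumr_eq0P _ tot0) => // a' _; exact: sumr_ge0.
  have M_eq0 a c : M a c = 0 by apply: (psumr_eq0P _ (row0 a)).
  by rewrite /diag_mul /antidiag_mul !M_eq0 !mul0r.
split=> [indep | diag_eq a c _].
  apply/eqP; rewrite -subr_eq0; apply/eqP.
  have tot_gt0 : 0 < total2 M by rewrite lt0r tot_neq0 sumr_ge0 // => a _; rewrite sumr_ge0.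
  by have := (eq_div_sq _ _ _ tot_neq0).1 (indep o1 o1 tot_gt0); rewrite indep2_defect mul1r.
by apply/eq_div_sq => //; rewrite indep2_defect diag_eq subrr mulr0.
Qed.

Definition cross_null M := diag_mul M = 0 /\ antidiag_mul M = 0.

Lemma cross_null_of_pattern (T : finType) (E F : {set T}) (i : T) M :
  (forall a c, 0 <= M a c) -> (forall a c, 0 < M a c -> cond2_pattern E F i a c) ->
  cross_null M.
Proof.
move=> M0 pat.
have prod0 a c a' c' : ~ (0 < M a c /\ 0 < M a' c') -> M a c * M a' c' = 0.
  move=> not_both; have [->|Mac] := eqVneq (M a c) 0; first by rewrite mul0r.
  have [->|Mac'] := eqVneq (M a' c') 0; first by rewrite mulr0.
  by case: not_both; rewrite !lt0r Mac Mac' !M0.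
split; apply: prod0.
  move=> [/pat[inE _ _ _] /pat[_ _ _ notinE]].
  by case/negP: (notinE (conj erefl erefl)); exact: inE.
move=> [/pat[_ inF _ _] /pat[_ _ notinF _]].
by case/negP: (notinF (conj erefl erefl)); exact: inF.
Qed.

Lemma cross_null_or_pattern (T : finType) (M : T -> 'I_2 -> 'I_2 -> R) :
  (exists i, ~ cross_null (M i)) \/
  exists E F : {set T}, forall i a c, M i a c != 0 -> cond2_pattern E F i a c.
Proof.
have [|all_null] := pselect (exists i, ~ cross_null (M i)); [by left | right].
exists [set i | M i o2 o2 == 0], [set i | M i o2 o1 == 0] => i a c Miac.
have [diag0 anti0] : cross_null (M i) by apply: contrapT => ?; apply: all_null; exists i.
split=> -[ea ec]; subst a c; rewrite inE //.
  by move/eqP: diag0; rewrite mulf_eq0 (negbTE Miac).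
by move/eqP: anti0; rewrite mulf_eq0 (negbTE Miac).
Qed.

Lemma proportional_trichotomy (I J : Type) (x y : I -> R) (z w : J -> R) (i0 : I) (j0 : J) :
  (forall i, 0 <= x i) -> (forall i, 0 <= y i) -> (forall i j, x i * z j = y i * w j) ->
  ~ (x i0 = 0 /\ y i0 = 0) -> ~ (z j0 = 0 /\ w j0 = 0) ->
  [\/ (forall i, y i = 0) /\ (forall j, z j = 0),
      (forall i, x i = 0) /\ (forall j, w j = 0) |
      exists2 k, 0 < k & (forall i, x i = k * y i) /\ (forall j, k * z j = w j)].
Proof.
move=> x0 y0 xz_yw nd_i0 nd_j0.
have [yi0|yi0] := eqVneq (y i0) 0.
  have xi0 : x i0 != 0 by apply/eqP => xi0; apply: nd_i0.
  have z0 j : z j = 0.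
    by apply/eqP; move: (xz_yw i0 j); rewrite yi0 mul0r => /eqP; rewrite mulf_eq0 (negbTE xi0).
  have wj0 : w j0 != 0 by apply/eqP => wj0; apply: nd_j0.
  apply: Or31; split=> // i; apply/eqP.
  by move: (xz_yw i j0); rewrite z0 mulr0 => /esym/eqP; rewrite mulf_eq0 (negbTE wj0) orbF.
have [xi0|xi0] := eqVneq (x i0) 0.
  have w0 j : w j = 0.
    by apply/eqP; move: (xz_yw i0 j); rewrite xi0 mul0r => /esym/eqP; rewrite mulf_eq0 (negbTE yi0).
  have zj0 : z j0 != 0 by apply/eqP => zj0; apply: nd_j0.
  apply: Or32; split=> // i; apply/eqP.
  by move: (xz_yw i j0); rewrite w0 mulr0 => /eqP; rewrite mulf_eq0 (negbTE zj0) orbF.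
have zw j : x i0 / y i0 * z j = w j by rewrite mulrAC xz_yw mulrAC mulfV ?mul1r.
have zj0 : z j0 != 0 by apply/eqP => zj0; apply: nd_j0; rewrite -zw zj0 mulr0.
apply: Or33; exists (x i0 / y i0); first by rewrite divr_gt0 // lt0r ?xi0 ?yi0 ?x0 ?y0.
split=> // i; apply: (mulIf zj0); rewrite xz_yw -zw; ring.
Qed.
End TwoByTwo.

Section Approximation.
Variable R : realType.
Local Open Scope classical_set_scope.
Implicit Types M : 'I_2 -> 'I_2 -> R.

Lemma cvg_sum (I : Type) (r : seq I) (P : pred I) (u : I -> nat -> R) (l : I -> R) :
  (forall i, u i @ \oo --> l i) ->
  (fun n => \sum_(i <- r | P i) u i n) @ \oo --> \sum_(i <- r | P i) l i.
Proof. by move=> u_l; apply: cvg_big => [|i _]; [exact: add_continuous | exact: u_l]. Qed.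

Lemma cvg_addr0 (x : R) (u : nat -> R) : u @ \oo --> 0 -> (fun n => x + u n) @ \oo --> x.
Proof. by move=> u0; rewrite -[X in _ --> X]addr0; apply: cvgD => //; exact: cvg_cst. Qed.

Lemma cvg_harmonic_sq : (fun n => harmonic n ^+ 2) @ \oo --> (0 : R).
Proof. by rewrite -(mulr0 0); apply: cvgM; exact: cvg_harmonic. Qed.

Lemma cvg_harmonic_sq_div (z : R) : 0 <= z ->
  (fun n => harmonic n ^+ 2 / (z + harmonic n)) @ \oo --> (0 : R).
Proof.
move=> z0; apply: (squeeze_cvgr _ (cvg_cst 0) cvg_harmonic); apply: nearW => n.
have h0 : 0 < harmonic n :> R := harmonic_gt0 n.
have zh0 := ltr_wpDl z0 h0.
apply/andP; split; first by rewrite divr_ge0 ?exprn_ge0 ?(ltW h0) ?(ltW zh0).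
rewrite ler_pdivrMr // expr2.
by apply: ler_wpM2l; [exact: ltW | rewrite lerDr].
Qed.

Definition ratio_approx M (k : nat -> R) : Prop :=
  exists M' : nat -> 'I_2 -> 'I_2 -> R,
    [/\ forall n a c, 0 < M' n a c,
        forall n, diag_mul (M' n) = k n * antidiag_mul (M' n) &
        forall a c, (fun n => M' n a c) @ \oo --> M a c].

Lemma ratio_approx_tr M k : ratio_approx M k -> ratio_approx (fun a c => M c a) k.
Proof.
move=> [M' [M'_gt0 ratio lim]]; exists (fun n a c => M' n c a); split=> // n.
by rewrite /diag_mul /antidiag_mul /= [M' n o2 o1 * _]mulrC; exact: ratio.
Qed.

Lemma ratio_approx_swap M k k' : (forall n, k n * k' n = 1) ->
  ratio_approx (fun a c => M a (rev_ord c)) k -> ratio_approx M k'.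
Proof.
move=> kk' [M' [M'_gt0 ratio lim]].
exists (fun n a c => M' n a (rev_ord c)); split=> // [n|a c].
  rewrite /diag_mul /antidiag_mul /= rev_ord_o1 rev_ord_o2.
  have := ratio n; rewrite /diag_mul /antidiag_mul => ->.
  by rewrite mulrA [k' n * _]mulrC kk' mul1r.
by have := lim a (rev_ord c); rewrite rev_ordK.
Qed.

Lemma ratio_approx_solve M (k X Y Z : nat -> R) :
  (forall n, 0 < k n) -> (forall n, [/\ 0 < X n, 0 < Y n & 0 < Z n]) ->
  X @ \oo --> M o1 o1 -> Y @ \oo --> M o2 o2 -> Z @ \oo --> M o1 o2 ->
  (fun n => X n * Y n / (k n * Z n)) @ \oo --> M o2 o1 ->
  ratio_approx M k.
Proof.
move=> k_gt0 XYZ_gt0 X_lim Y_lim Z_lim W_lim.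
pose W n := X n * Y n / (k n * Z n).
exists (fun n a c => if a == o1 then (if c == o1 then X n else Z n)
                    else (if c == o1 then W n else Y n)).
split=> [n a c | n | a c].
- have [X0 Y0 Z0] := XYZ_gt0 n; have W0 : 0 < W n by rewrite !(divr_gt0, mulr_gt0).
  by case: (I2P a) => ->; case: (I2P c) => ->.
- have [_ _ /gt_eqF Z0] := XYZ_gt0 n; have /gt_eqF k0 := k_gt0 n.
  by rewrite /diag_mul /antidiag_mul /= /W; field; rewrite k0 Z0.
- by case: (I2P a) => ->; case: (I2P c) => ->.
Qed.

Lemma ratio_approx_antidiag0 M : (forall a c, 0 <= M a c) -> antidiag_mul M = 0 ->
  ratio_approx M (fun n => (harmonic n ^+ 2)^-1).
Proof.
suff core N : (forall a c, 0 <= N a c) -> N o2 o1 = 0 ->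
    ratio_approx N (fun n => (harmonic n ^+ 2)^-1).
  move=> M0 /eqP; rewrite mulf_eq0 => /orP[/eqP M12 | /eqP M21]; last exact: core.
  exact: (ratio_approx_tr (core _ (fun a c => M0 c a) M12)).
move=> N0 N21; have h0 n : 0 < harmonic n :> R := harmonic_gt0 n.
apply: (ratio_approx_solve (X := fun n => N o1 o1 + harmonic n)
  (Y := fun n => N o2 o2 + harmonic n) (Z := fun n => N o1 o2 + harmonic n)).
- by move=> n; rewrite invr_gt0 exprn_gt0.
- by move=> n; split; apply: ltr_wpDl.
- exact: cvg_addr0 cvg_harmonic.
- exact: cvg_addr0 cvg_harmonic.
- exact: cvg_addr0 cvg_harmonic.
rewrite N21 -(mulr0 (N o1 o1 * N o2 o2)).
under eq_fun do rewrite invfM invrK.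
apply: cvgM; last exact: cvg_harmonic_sq_div.
by apply: cvgM; exact: cvg_addr0 cvg_harmonic.
Qed.

Lemma ratio_approx_diag0 M : (forall a c, 0 <= M a c) -> diag_mul M = 0 ->
  ratio_approx M (fun n => harmonic n ^+ 2).
Proof.
move=> M0 diag0; apply: (ratio_approx_swap (k := fun n => (harmonic n ^+ 2)^-1)).
  by move=> n; rewrite mulVf // expf_neq0 // gt_eqF // harmonic_gt0.
apply: ratio_approx_antidiag0 => [a c|]; first exact: M0.
by rewrite /antidiag_mul /= rev_ord_o1 rev_ord_o2.
Qed.

Lemma ratio_approx_cross_null M (k : R) : 0 < k -> (forall a c, 0 <= M a c) ->
  cross_null M -> ratio_approx M (fun _ => k).
Proof.
move=> k_gt0.
suff core N : (forall a c, 0 <= N a c) -> diag_mul N = 0 -> N o2 o1 = 0 ->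
    ratio_approx N (fun _ => k).
  move=> M0 [diag0 /eqP]; rewrite mulf_eq0 => /orP[/eqP M12 | /eqP M21]; last exact: core.
  exact: (ratio_approx_tr (core _ (fun a c => M0 c a) diag0 M12)).
move=> N0 diag0 N21; have h0 n : 0 < harmonic n :> R := harmonic_gt0 n.
apply: (ratio_approx_solve (X := fun n => N o1 o1 + harmonic n ^+ 2)
  (Y := fun n => N o2 o2 + harmonic n ^+ 2) (Z := fun n => N o1 o2 + harmonic n)).
- by [].
- by move=> n; split; apply: ltr_wpDl; rewrite ?exprn_gt0.
- exact: cvg_addr0 cvg_harmonic_sq.
- exact: cvg_addr0 cvg_harmonic_sq.
- exact: cvg_addr0 cvg_harmonic.
(* Since [N o1 o1 * N o2 o2 = 0], the product of the perturbed diagonal is O(h^2). *)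
have -> : (fun n => (N o1 o1 + harmonic n ^+ 2) * (N o2 o2 + harmonic n ^+ 2)
                    / (k * (N o1 o2 + harmonic n)))
        = fun n => (N o1 o1 + N o2 o2 + harmonic n ^+ 2) / k
                   * (harmonic n ^+ 2 / (N o1 o2 + harmonic n)).
  apply/funext => n; have /gt_eqF Z0 : 0 < N o1 o2 + harmonic n by exact: ltr_wpDl.
  have diag0' : N o1 o1 * N o2 o2 = 0 := diag0.
  transitivity ((N o1 o1 * N o2 o2 + harmonic n ^+ 2 * (N o1 o1 + N o2 o2 + harmonic n ^+ 2))
                / (k * (N o1 o2 + harmonic n))); first by congr (_ / _); ring.
  by rewrite diag0' add0r; field; rewrite Z0 gt_eqF.
rewrite N21 -(mulr0 ((N o1 o1 + N o2 o2) / k)).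
apply: cvgM; last exact: cvg_harmonic_sq_div.
by apply: cvgM; [exact: cvg_addr0 cvg_harmonic_sq | exact: cvg_cst].
Qed.

Lemma ratio_approx_const M (k : R) : 0 < k -> (forall a c, 0 <= M a c) ->
  diag_mul M = k * antidiag_mul M -> ratio_approx M (fun _ => k).
Proof.
move=> k_gt0 M0 ratio; have [anti0|anti_neq0] := eqVneq (antidiag_mul M) 0.
  by apply: ratio_approx_cross_null => //; rewrite /cross_null ratio anti0 mulr0.
exists (fun _ => M); split=> // [n a c | a c]; last exact: cvg_cst.
have : diag_mul M != 0 by rewrite ratio mulf_eq0 (gt_eqF k_gt0) (negbTE anti_neq0).
move: anti_neq0; rewrite /diag_mul /antidiag_mul !mulf_eq0 !negb_or.
move=> /andP[M12 M21] /andP[M11 M22].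
by case: (I2P a) => ->; case: (I2P c) => ->; rewrite lt0r M0 andbT.
Qed.
End Approximation.

Section Distribution.
Variables (R : realType) (r2 r4 : nat).
Local Open Scope classical_set_scope.
Implicit Types p q : dist4 R r2 r4.

Definition slice p b d : 'I_2 -> 'I_2 -> R := fun a c => p a b c d.

Definition singular_slices p :=
  forall b d, diag_mul (slice p b d) = antidiag_mul (slice p b d).

Lemma CI_13_24P p : (forall a b c d, 0 <= p a b c d) -> CI_13_24 p <-> singular_slices p.
Proof.
move=> p0; split=> [ci b d | sing a b c d].
  by apply/indep2P => [a c|a c]; [exact: p0 | exact: ci].
exact: (indep2P (fun a c => p0 a b c d)).2 (sing b d) a c.
Qed.

Lemma CI_24_13_factor p : (forall a b c d, 0 <= p a b c d) -> CI_24_13 p ->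
  forall a b c d, p a b c d = m123 p a b c * (m134 p a c d / m13 p a c).
Proof.
move=> p0 ci a b c d; have [m0|m_neq0] := eqVneq (m13 p a c) 0.
  rewrite m0 invr0 !mulr0.
  have row0 x : \sum_(y : 'I_r4) p a x c y = 0.
    by apply: (psumr_eq0P _ m0) => // x' _; exact: sumr_ge0.
  exact: (psumr_eq0P (fun y _ => p0 a b c y) (row0 b)).
have m_gt0 : 0 < m13 p a c by rewrite lt0r m_neq0 sumr_ge0 // => b' _; exact: sumr_ge0.
by rewrite -(divfK m_neq0 (p a b c d)) (ci a b c d m_gt0); field.
Qed.

Lemma cond2_singular p : (forall a b c d, 0 <= p a b c d) -> cond2 p -> singular_slices p.
Proof.
move=> p0 cond b d; suff [-> ->] : cross_null (slice p b d) by [].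
case: cond => -[E [F pat]].
  by apply: (cross_null_of_pattern (i := b) (E := E) (F := F)) => a c; [exact: p0 | exact: pat].
by apply: (cross_null_of_pattern (i := d) (E := E) (F := F)) => a c; [exact: p0 | exact: pat].
Qed.

Definition C4_product q : Prop :=
  exists (psi12 : 'I_2 -> 'I_r2 -> R) (psi23 : 'I_r2 -> 'I_2 -> R)
         (psi34 : 'I_2 -> 'I_r4 -> R) (psi14 : 'I_2 -> 'I_r4 -> R),
    forall a b c d, q a b c d = psi12 a b * psi23 b c * psi34 c d * psi14 a d.

Lemma C4_product_singular q : C4_product q -> singular_slices q.
Proof.
move=> [psi12 [psi23 [psi34 [psi14 q_eq]]]] b d.
by rewrite /diag_mul /antidiag_mul /slice !q_eq; ring.
Qed.

Lemma C4_product_divr q (s : R) : C4_product q -> C4_product (fun a b c d => q a b c d / s).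
Proof.
move=> [psi12 [psi23 [psi34 [psi14 q_eq]]]].
by exists psi12, psi23, (fun c d => psi34 c d / s), psi14 => a b c d; rewrite q_eq; ring.
Qed.

Lemma C4_product_of_ratio (P : 'I_r2 -> 'I_2 -> 'I_2 -> R) (Q : 'I_r4 -> 'I_2 -> 'I_2 -> R)
    (k k' : R) :
  (forall b a c, 0 < P b a c) -> (forall d a c, 0 < Q d a c) -> k * k' = 1 ->
  (forall b, diag_mul (P b) = k * antidiag_mul (P b)) ->
  (forall d, diag_mul (Q d) = k' * antidiag_mul (Q d)) ->
  C4_product (fun a b c d => P b a c * Q d a c).
Proof.
move=> P_gt0 Q_gt0 kk' P_ratio Q_ratio.
have k0 : k != 0 by apply/eqP => k0; move: kk'; rewrite k0 mul0r => /eqP; rewrite eq_sym oner_eq0.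
have k'E : k' = k^-1 by rewrite -[k^-1]mulr1 -kk' mulKf.
exists (fun a b => P b a o1), (fun b c => P b o1 c / P b o1 o1),
  (fun c d => Q d o1 c / Q d o1 o1), (fun a d => Q d a o1) => a b c d.
have P11 := lt0r_neq0 (P_gt0 b o1 o1); have Q11 := lt0r_neq0 (Q_gt0 d o1 o1).
case: (I2P a) => ->; case: (I2P c) => ->; try by field; rewrite P11 Q11.
have P22 : P b o2 o2 = k * (P b o1 o2 * P b o2 o1) / P b o1 o1.
  by have := P_ratio b; rewrite /diag_mul /antidiag_mul => <-; rewrite mulrAC mulfV ?mul1r.
have Q22 : Q d o2 o2 = k' * (Q d o1 o2 * Q d o2 o1) / Q d o1 o1.
  by have := Q_ratio d; rewrite /diag_mul /antidiag_mul => <-; rewrite mulrAC mulfV ?mul1r.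
by rewrite P22 Q22 k'E; field; rewrite P11 Q11 k0.
Qed.

Definition total4 q := \sum_(a : 'I_2) \sum_(b : 'I_r2) \sum_(c : 'I_2) \sum_(d : 'I_r4) q a b c d.

Lemma total4_divr q (s : R) : total4 (fun a b c d => q a b c d / s) = total4 q / s.
Proof.
rewrite /total4 mulr_suml; apply: eq_bigr => a _; rewrite mulr_suml; apply: eq_bigr => b _.
by rewrite mulr_suml; apply: eq_bigr => c _; rewrite mulr_suml.
Qed.

Lemma closure_of_cvg p (q : nat -> dist4 R r2 r4) :
  is_prob p -> (forall n a b c d, 0 < q n a b c d) -> (forall n, C4_product (q n)) ->
  (forall a b c d, (fun n => q n a b c d) @ \oo --> p a b c d) -> in_closure_MC4 p.
Proof.
move=> [_ p1] q_gt0 q_prod q_lim e e_gt0.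
have tot_lim : (fun n => total4 (q n)) @ \oo --> (1 : R).
  by rewrite -p1; do 4 apply: cvg_sum => ?; exact: q_lim.
have tot_gt0 : \forall n \near \oo, 0 < total4 (q n) by exact: (cvgr_gt _ tot_lim _ ltr01).
have close : \forall n \near \oo,
    forall a b c d, `|p a b c d - q n a b c d / total4 (q n)| < e.
  do 4 apply: filter_forall => ?; apply: cvgr_dist_lt => //.
  rewrite -[p _ _ _ _]mulr1 -[X in _ * X]invr1; apply: cvgM; first exact: q_lim.
  by apply: cvgV tot_lim; exact: oner_neq0.
near \oo => n.
have Z_gt0 : 0 < total4 (q n) by near: n.
exists (fun a b c d => q n a b c d / total4 (q n)); split; last by near: n.
split; [split | split] => [a b c d | | a b c d |].
- by rewrite divr_ge0 ?ltW.
- by rewrite -[LHS]/(total4 _) total4_divr mulfV ?gt_eqF.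
- by rewrite divr_gt0.
- exact: C4_product_divr.
Unshelve. all: by end_near.
Qed.

Lemma closure_of_ratio_approx p (P : 'I_r2 -> 'I_2 -> 'I_2 -> R) (Q : 'I_r4 -> 'I_2 -> 'I_2 -> R)
    (k k' : nat -> R) :
  is_prob p -> (forall a b c d, p a b c d = P b a c * Q d a c) -> (forall n, k n * k' n = 1) ->
  (forall b, ratio_approx (P b) k) -> (forall d, ratio_approx (Q d) k') -> in_closure_MC4 p.
Proof.
move=> prob_p p_eq kk' /choice[P' P'_spec] /choice[Q' Q'_spec].
apply: (closure_of_cvg (q := fun n a b c d => P' b n a c * Q' d n a c)) => //
  [n a b c d | n | a b c d].
- by have [P'_gt0 _ _] := P'_spec b; have [Q'_gt0 _ _] := Q'_spec d; exact: mulr_gt0.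
- apply: (C4_product_of_ratio _ _ (kk' n)) => [b a c | d a c | b | d].
  + by have [P'_gt0 _ _] := P'_spec b.
  + by have [Q'_gt0 _ _] := Q'_spec d.
  + by have [_ P'_ratio _] := P'_spec b.
  + by have [_ Q'_ratio _] := Q'_spec d.
- rewrite p_eq; apply: cvgM.
  + by have [_ _ P'_lim] := P'_spec b.
  + by have [_ _ Q'_lim] := Q'_spec d.
Qed.

Lemma closure_of_factors p (P : 'I_r2 -> 'I_2 -> 'I_2 -> R) (Q : 'I_r4 -> 'I_2 -> 'I_2 -> R)
    (b0 : 'I_r2) (d0 : 'I_r4) :
  is_prob p -> (forall b a c, 0 <= P b a c) -> (forall d a c, 0 <= Q d a c) ->
  (forall a b c d, p a b c d = P b a c * Q d a c) -> singular_slices p ->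
  ~ cross_null (P b0) -> ~ cross_null (Q d0) -> in_closure_MC4 p.
Proof.
move=> prob_p P0 Q0 p_eq sing P_b0 Q_d0.
have cross b d : diag_mul (P b) * diag_mul (Q d) = antidiag_mul (P b) * antidiag_mul (Q d).
  by have := sing b d; rewrite /diag_mul /antidiag_mul /slice !p_eq => e; rewrite mulrACA e mulrACA.
have h2_neq0 n : harmonic n ^+ 2 != 0 :> R by rewrite expf_neq0 // gt_eqF // harmonic_gt0.
have [[anti0 diag0] | [diag0 anti0] | [k k_gt0 [P_ratio Q_ratio]]] :=
  proportional_trichotomy (fun b => mulr_ge0 (P0 b o1 o1) (P0 b o2 o2))
    (fun b => mulr_ge0 (P0 b o1 o2) (P0 b o2 o1)) cross P_b0 Q_d0.
- apply: (closure_of_ratio_approx prob_p p_eq (k := fun n => (harmonic n ^+ 2)^-1)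
    (k' := fun n => harmonic n ^+ 2)) => [n | b | d].
  + exact: mulVf.
  + exact: ratio_approx_antidiag0 (P0 b) (anti0 b).
  + exact: ratio_approx_diag0 (Q0 d) (diag0 d).
- apply: (closure_of_ratio_approx prob_p p_eq (k := fun n => harmonic n ^+ 2)
    (k' := fun n => (harmonic n ^+ 2)^-1)) => [n | b | d].
  + exact: mulfV.
  + exact: ratio_approx_diag0 (P0 b) (diag0 b).
  + exact: ratio_approx_antidiag0 (Q0 d) (anti0 d).
- apply: (closure_of_ratio_approx prob_p p_eq (k := fun=> k) (k' := fun=> k^-1)) => [n | b | d].
  + by rewrite mulfV ?gt_eqF.
  + exact: ratio_approx_const k_gt0 (P0 b) (P_ratio b).
  + apply: ratio_approx_const (Q0 d) _; first by rewrite invr_gt0.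
    by rewrite -Q_ratio mulKf ?gt_eqF.
Qed.

Lemma closure_singular p : in_closure_MC4 p -> singular_slices p.
Proof.
move=> cl b d.
have /choice[q q_spec] n : exists q, in_MC4 q /\
    forall a b c d, `|p a b c d - q a b c d| < harmonic n := cl _ (harmonic_gt0 n).
have q_lim a b' c d' : (fun n => q n a b' c d') @ \oo --> p a b' c d'.
  apply/cvgrPdist_lt => e e_gt0; near=> n.
  apply: lt_trans ((q_spec n).2 a b' c d') _.
  by near: n; exact: (cvgr_lt _ cvg_harmonic _ e_gt0).
have det_lim : (fun n => diag_mul (slice (q n) b d) - antidiag_mul (slice (q n) b d))
    @ \oo --> diag_mul (slice p b d) - antidiag_mul (slice p b d).
  by apply: cvgB; apply: cvgM; exact: q_lim.
apply/eqP; rewrite -subr_eq0; apply/eqP; apply: (cvg_unique (@norm_hausdorff _ R) det_lim) => /=.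
under eq_fun => n do rewrite (C4_product_singular (q_spec n).1.2.2) subrr.
exact: cvg_cst.
Unshelve. all: by end_near.
Qed.
End Distribution.

Theorem corollary4p5 (R : realType) (r2 r4 : nat) (p : dist4 R r2 r4) :
  is_prob p ->
  ((CI_13_24 p /\ CI_24_13 p -> in_closure_MC4 p \/ cond2 p) /\
   ((in_closure_MC4 p \/ cond2 p) -> CI_24_13 p -> CI_13_24 p /\ CI_24_13 p)).
Proof.
move=> prob_p; have p0 := prob_p.1; split=> [[ci13 ci24] | model ci24]; last first.
  split=> //; apply/(CI_13_24P p0).
  by case: model => [/closure_singular | /(cond2_singular p0)].
pose P b a c := m123 p a b c; pose Q d a c := m134 p a c d / m13 p a c.
have p_eq : forall a b c d, p a b c d = P b a c * Q d a c := CI_24_13_factor p0 ci24.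
have supp a b c d : 0 < p a b c d -> P b a c != 0 /\ Q d a c != 0.
  by rewrite p_eq => /lt0r_neq0; rewrite mulf_eq0 negb_or => /andP.
have [[b0 P_b0] | [E [F patP]]] := cross_null_or_pattern P; last first.
  by right; left; exists E, F => a b c d /supp[/patP].
have [[d0 Q_d0] | [E [F patQ]]] := cross_null_or_pattern Q; last first.
  by right; right; exists E, F => a b c d /supp[_ /patQ].
left; apply: (closure_of_factors prob_p _ _ p_eq _ P_b0 Q_d0) => [b a c | d a c |].
- by apply: sumr_ge0 => d _; exact: p0.
- by rewrite divr_ge0 // sumr_ge0 // => *; rewrite ?sumr_ge0.
- exact/(CI_13_24P p0).
Qed.
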